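(* Let $X$ be a topological space, let $\rho:\mathcal{F}\to[\Psi]^\omega$ be a partition regular function, and let $x:\Psi\to X$ be a sequence. Then \[ \Lambda_x(\mathcal{I}_\rho)\subseteq\Lambda_x(\rho)\subseteq\Gamma_x(\rho). \]
   Context: Let $\Omega,\Psi$ be countably infinite sets, $[\Psi]^\omega$ the family of infinite subsets of $\Psi$, and $\mathcal{F}\subseteq[\Omega]^\omega$ a nonempty family with $A\setminus K\in\mathcal{F}$ for all $A\in\mathcal{F}$ and finite $K\subseteq\Omega$. A function $\rho:\mathcal{F}\to[\Psi]^\omega$ is partition regular if: (M) $E\subseteq F$ in $\mathcal{F}$ implies $\rho(E)\subseteq\rho(F)$; (R) for every $F\in\mathcal{F}$ and $A,B\subseteq\Psi$ with $\rho(F)=A\cup B$ there is $E\in\mathcal{F}$ with $\rho(E)\subseteq A$ or $\rho(E)\subseteq B$; (S) for every $F\in\mathcal{F}$ there is $E\subseteq F$, $E\in\mathcal{F}$, such that for every $a\in\rho(E)$ there is a finite $K\subseteq\Omega$ with $a\notin\rho(E\setminus K)$. $\mathcal{I}_\rho=\{S\subseteq\Psi:\forall F\in\mathcal{F}\ \rho(F)\not\subseteq S\}$ (an ideal on $\Psi$), and $\mathcal{I}_\rho^+=\mathcal{P}(\Psi)\setminus\mathcal{I}_\rho$. $\Gamma_x(\rho)$ ($\rho$-cluster points) is the set of $\eta\in X$ such that for every neighborhood $U$ of $\eta$ there is $F\in\mathcal{F}$ with $\rho(F)\subseteq\{s\in\Psi:x_s\in U\}$. $\Lambda_x(\rho)$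 ($\rho$-limit points) is the set of $\eta\in X$ for which there is $F\in\mathcal{F}$ such that for every neighborhood $U$ of $\eta$ there is a finite $K\subseteq\Omega$ with $x_s\in U$ for all $s\in\rho(F\setminus K)$. $\Lambda_x(\mathcal{I}_\rho)$ is the set of $\eta\in X$ for which there is $S\in\mathcal{I}_\rho^+$ such that the subsequence $(x_s)_{s\in S}$ converges to $\eta$ in the ordinary sense (for each neighborhood $U$ of $\eta$, $x_s\in U$ for all but finitely many $s\in S$). *)

From mathcomp Require Import all_boot all_classical topology.
Set Implicit Arguments. Unset Strict Implicit. Unset Printing Implicit Defensive.
Local Open Scope classical_set_scope.

Definition countably_infinite (T : Type) : Prop :=
  countable [set: T] /\ infinite_set [set: T].

Definition admissible_family (Omega : Type) (F : set (set Omega)) : Prop :=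
  [/\ F !=set0,
      (forall A, F A -> infinite_set A) &
      (forall A K, F A -> finite_set K -> F (A `\` K))].

(* rho : F -> [Psi]^omega, represented as a total function that is only used
   on members of F. *)
Definition partition_regular (Omega Psi : Type) (F : set (set Omega))
    (rho : set Omega -> set Psi) : Prop :=
  [/\ (forall E, F E -> infinite_set (rho E)),
      (forall E G, F E -> F G -> E `<=` G -> rho E `<=` rho G),
      (forall G (A B : set Psi), F G -> rho G = A `|` B ->
          exists2 E, F E & (rho E `<=` A \/ rho E `<=` B)) &
      (forall G, F G -> exists E, [/\ E `<=` G, F E &
          forall a, rho E a -> exists2 K, finite_set K & ~ rho (E `\` K) a])].

Definition I_rho (Omega Psi : Type) (F : set (set Omega))
    (rho : set Omega -> set Psi) : set (set Psi) :=
  [set S | forall E, F E -> ~ (rho E `<=` S)].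

Definition I_rho_plus (Omega Psi : Type) (F : set (set Omega))
    (rho : set Omega -> set Psi) : set (set Psi) :=
  ~` I_rho F rho.

Definition rho_cluster (Omega Psi : Type) (X : topologicalType)
    (F : set (set Omega)) (rho : set Omega -> set Psi) (x : Psi -> X) : set X :=
  [set eta | forall U, nbhs eta U ->
     exists2 E, F E & rho E `<=` [set s | U (x s)]].

Definition rho_limit (Omega Psi : Type) (X : topologicalType)
    (F : set (set Omega)) (rho : set Omega -> set Psi) (x : Psi -> X) : set X :=
  [set eta | exists2 E, F E & forall U, nbhs eta U ->
     exists2 K, finite_set K & forall s, rho (E `\` K) s -> U (x s)].

(* I_rho-limit points Lambda_x(I_rho): limits of ordinary convergent
   subsequences indexed by an I_rho-positive set. *)
Definition ideal_limit (Omega Psi : Type) (X : topologicalType)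
    (F : set (set Omega)) (rho : set Omega -> set Psi) (x : Psi -> X) : set X :=
  [set eta | exists2 S, I_rho_plus F rho S & forall U, nbhs eta U ->
     finite_set [set s | S s /\ ~ U (x s)]].

From mathcomp Require Import all_boot all_classical topology.
Local Open Scope classical_set_scope.

(* A rho-limit point is a rho-cluster point because each
   [rho (E `\` K)] is itself a witness of the cluster condition.  For an
   I_rho-limit point eta, fix S in I_rho^+ along which x converges to eta; S
   contains some [rho E0], and axiom (S) shrinks E0 to an E in which every
   point of [rho E] disappears after removing finitely many elements of E.
   Given a neighbourhood U, only finitely many s in S have x s outside U;
   removing from E the finite sets attached to these s leaves an [E `\` K]
   whose image under rho lies inside the preimage of U. *)

Section RhoLimits.

Variables (Omega Psi : Type) (F : set (set Omega)) (rho : set Omega -> set Psi).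

Hypothesis F_setD : forall A K, F A -> finite_set K -> F (A `\` K).
Hypothesis rho_mono : forall E G, F E -> F G -> E `<=` G -> rho E `<=` rho G.

Definition finitely_removable (E : set Omega) : Prop :=
  forall a, rho E a -> exists2 K, finite_set K & ~ rho (E `\` K) a.

Lemma I_rho_plusP (S : set Psi) :
  I_rho_plus F rho S -> exists2 E, F E & rho E `<=` S.
Proof.
move=> S_pos; apply: contrapT => noE; apply: S_pos => E FE rhoES.
by apply: noE; exists E.
Qed.

Lemma rho_setD_sub {E K : set Omega} :
  F E -> finite_set K -> rho (E `\` K) `<=` rho E.
Proof.
by move=> FE finK; apply: rho_mono => //; exact: F_setD.
Qed.

Lemma finitely_removable_avoid {E : set Omega} {T : set Psi} :
  F E -> finitely_removable E -> finite_set T ->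
  exists2 K, finite_set K & forall s, rho (E `\` K) s -> ~ T s.
Proof.
move=> FE removE finT.
have [Kof KofP] : {Kof : Psi -> set Omega & forall a, rho E a ->
    finite_set (Kof a) /\ ~ rho (E `\` Kof a) a}.
  apply: (@choice _ _ (fun a K => rho E a -> finite_set K /\ ~ rho (E `\` K) a)).
  move=> a; have [rhoEa | not_rhoEa] := pselect (rho E a); last by exists set0.
  by have [K finK notK] := removE a rhoEa; exists K.
pose K := \bigcup_(a in T `&` rho E) Kof a.
have finK : finite_set K.
  apply: bigcup_finite; first exact: finite_setIl.
  by move=> a [_ /KofP[]].
exists K => // s rhoEKs Ts.
have rhoEs : rho E s by exact: rho_setD_sub rhoEKs.
have [finKs notKs] := KofP s rhoEs.
apply: notKs; apply: rho_mono rhoEKs; [exact: F_setD | exact: F_setD |].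
by move=> w [Ew notKw]; split=> // Ksw; apply: notKw; exists s.
Qed.

Variables (X : topologicalType) (x : Psi -> X).

Lemma rho_limit_sub_cluster : rho_limit F rho x `<=` rho_cluster F rho x.
Proof.
move=> eta [E FE limE] U /limE[K finK inU].
by exists (E `\` K); [exact: F_setD | move=> s /inU].
Qed.

Hypothesis rho_removable :
  forall G, F G -> exists E, [/\ E `<=` G, F E & finitely_removable E].

Lemma ideal_limit_sub_rho_limit : ideal_limit F rho x `<=` rho_limit F rho x.
Proof.
move=> eta [S /I_rho_plusP[E0 FE0 rhoE0S] limS].
have [E [EE0 FE removE]] := rho_removable _ FE0.
have rhoES : rho E `<=` S by move=> s /(rho_mono _ _ FE FE0 EE0)/rhoE0S.
exists E => // U /limS finOut.
have [K finK avoid] := finitely_removable_avoid FE removE finOut.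
exists K => // s rhoEKs; apply: contrapT => notUs; apply: (avoid s rhoEKs).
by split=> //; apply/rhoES/(rho_setD_sub FE finK).
Qed.

End RhoLimits.

Theorem proposition2p4 (Omega Psi : Type) (X : topologicalType)
    (F : set (set Omega)) (rho : set Omega -> set Psi) (x : Psi -> X) :
  countably_infinite Omega -> countably_infinite Psi ->
  admissible_family F -> partition_regular F rho ->
  ideal_limit F rho x `<=` rho_limit F rho x /\
  rho_limit F rho x `<=` rho_cluster F rho x.
Proof.
move=> _ _ [_ _ F_setD] [_ rho_mono _ rho_removable].
split; first exact: ideal_limit_sub_rho_limit.
exact: rho_limit_sub_cluster.
Qed.
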